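(* Let $(R,B)$ be an EIC problem with problem graph $G$ and let $(\tilde N_1,\dots,\tilde N_n)$ be a neighborhood partition. For each $w\in[n]$, let $(R^{(w)},B^{(w)})$ be the EIC problem induced by $\tilde N_w$, and let $\beta^{(w)}\in\mathbb{F}_2^{h_w\times m}$ be (the zero-column extension of) a centralized linear broadcast solution to $(R^{(w)},B^{(w)})$. Then $\beta^{(1)},\dots,\beta^{(n)}$ is a task-based solution to $(R,B)$ of length $\sum_{i=1}^n h_i$.
   Context: An EIC problem is a pair $(R,B)$ of matrices in $\mathbb{F}_2^{n\times m}$ with disjoint supports (node $u$ needs block $a$ iff $R_{ua}=1$, has it iff $B_{ua}=1$). $P=\{(u,a):R_{ua}=1\}$. The problem graph $G=(V,E)$ has vertices $V=\{v_{(u,a)}:(u,a)\in P\}$ and a directed edge from $v_{(u,a)}$ to $v_{(w,b)}$ iff $B_{ub}=1$ or $a=b$. $B_u$ denotes row $u$ of $B$, $\mathrm{diag}(B_u)$ the diagonal matrix with diagonal $B_u$, $\boldsymbol e_a$ the $a$-th standard basis row vector. The sender neighborhood of node $k$ is $N_k=\{v_{(w,b)}\in V: B_{kb}=1\}$. A neighborhood partition is a tuple $(\tilde N_1,\dots,\tilde N_n)$ with $\tilde N_i\subseteq N_i$, pairwise disjoint, and $\bigcup_i\tilde N_i=V$. For $S\subseteq V$, the EIC problem induced by $S$ is defined on the block set $\mathcal{B}_S=\{a:\exists u,\ v_{(u,a)}\in S\}$: $R^{S}\in\mathbb{F}_2^{n\times\mathcal{B}_S}$ has $R^S_{ua}=1$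 iff $v_{(u,a)}\in S$, and $B^{S}$ is the restriction of $B$ to the columns $\mathcal{B}_S$; its problem graph is the induced subgraph $G|_S$. A centralized linear broadcast solution to an EIC problem $(R',B')$ on block set $\mathcal{B}$ is a matrix $\beta$ with $h$ rows and columns indexed by $\mathcal{B}$ such that for each requirement pair $(u,a)$ of $(R',B')$ there is $\boldsymbol\alpha$ with $\boldsymbol e_a=\boldsymbol\alpha\cdot\left[\begin{smallmatrix}\beta\\ \mathrm{diag}(B'_u)\end{smallmatrix}\right]$; its zero-column extension is the $h\times m$ matrix agreeing with $\beta$ on columns in $\mathcal{B}$ and zero elsewhere. A linear broadcast solution to $(R,B)$ is a tuple $\beta^{(1)},\dots,\beta^{(n)}$, $\beta^{(u)}\in\mathbb{F}_2^{h_u\times m}$, such that the $a$-th column of $\beta^{(u)}$ is zero whenever $B_{ua}=0$ and for each $(u,a)\in P$, $\boldsymbol e_a$ is an $\mathbb{F}_2$-linear combination of the rows of all $\beta^{(\ell)}$ and of $\mathrm{diag}(B_u)$. It is task-based if for every $(u,a)\in P$ there is $\ell\in[n]$ and $\boldsymbol\alpha\in\mathbb{F}_2^{h_\ell+m}$ with $\boldsymbol e_a=\boldsymbol\alpha\cdot\left[\begin{smallmatrix}\beta^{(\ell)}\\ \mathrm{diag}(B_u)\end{smallmatrix}\right]$. Its length is $\sum_u h_u$. *)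

From HB Require Import structures.
From mathcomp Require Import all_boot all_order all_algebra.
Set Implicit Arguments. Unset Strict Implicit. Unset Printing Implicit Defensive.
Import GRing.Theory.
Local Open Scope ring_scope.

Notation F2 := 'F_2.

Section EIC.
Variables (n m : nat).

Definition EIC_problem (R B : 'M[F2]_(n, m)) : Prop :=
  forall u a, ~~ ((R u a == 1) && (B u a == 1)).

(* P = vertex set V of the problem graph (v_(u,a) identified with (u,a)). *)
Definition req_pairs (R : 'M[F2]_(n, m)) : {set 'I_n * 'I_m} :=
  [set p | R p.1 p.2 == 1].

(* Edge relation of the problem graph (not needed for the statement, given
   for completeness). *)
Definition problem_edge (B : 'M[F2]_(n, m)) (p q : 'I_n * 'I_m) : bool :=
  (B p.1 q.2 == 1) || (p.2 == q.2).

Definition sender_nbhd (R B : 'M[F2]_(n, m)) (k : 'I_n) : {set 'I_n * 'I_m} :=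
  [set p in req_pairs R | B k p.2 == 1].

Definition neighborhood_partition (R B : 'M[F2]_(n, m))
    (Nt : 'I_n -> {set 'I_n * 'I_m}) : Prop :=
  [/\ forall i, Nt i \subset sender_nbhd R B i,
      forall i j, i != j -> [disjoint Nt i & Nt j]
    & \bigcup_(i < n) Nt i = req_pairs R].

Definition induced_blocks (S : {set 'I_n * 'I_m}) : {set 'I_m} :=
  [set a | [exists u, (u, a) \in S]].

(* The columns of the induced problem are indexed by 'I_#|B_S|, via the
   enumeration enum_val : 'I_#|B_S| -> 'I_m of B_S. *)
Definition induced_R (S : {set 'I_n * 'I_m}) : 'M[F2]_(n, #|induced_blocks S|) :=
  \matrix_(u, j) ((u, enum_val j) \in S)%:R.

Definition induced_B (B : 'M[F2]_(n, m)) (S : {set 'I_n * 'I_m})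
  : 'M[F2]_(n, #|induced_blocks S|) :=
  \matrix_(u, j) B u (enum_val j).

Definition zero_col_ext (S : {set 'I_n * 'I_m}) (h : nat)
    (beta : 'M[F2]_(h, #|induced_blocks S|)) (beta' : 'M[F2]_(h, m)) : Prop :=
  (forall i j, beta' i (enum_val j) = beta i j) /\
  (forall i a, a \notin induced_blocks S -> beta' i a = 0).

End EIC.

Definition unit_row (k : nat) (a : 'I_k) : 'rV[F2]_k := delta_mx 0 a.

Definition centralized_solution (n k h : nat) (R' B' : 'M[F2]_(n, k))
    (beta : 'M[F2]_(h, k)) : Prop :=
  forall u a, R' u a = 1 ->
    (unit_row a <= col_mx beta (diag_mx (row u B')))%MS.

(* Linear broadcast solution to (R,B). The row space of all beta^(l) stacked
   is the sum of their row spaces. *)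
Definition linear_broadcast_solution (n m : nat) (R B : 'M[F2]_(n, m))
    (h : 'I_n -> nat) (beta : forall u : 'I_n, 'M[F2]_(h u, m)) : Prop :=
  (forall u a, B u a = 0 -> forall i, beta u i a = 0) /\
  (forall u a, R u a = 1 ->
     (unit_row a <= (\sum_(l < n) <<beta l>>) + diag_mx (row u B))%MS).

Definition task_based_solution (n m : nat) (R B : 'M[F2]_(n, m))
    (h : 'I_n -> nat) (beta : forall u : 'I_n, 'M[F2]_(h u, m)) : Prop :=
  linear_broadcast_solution R B beta /\
  (forall u a, R u a = 1 ->
     exists l : 'I_n, (unit_row a <= col_mx (beta l) (diag_mx (row u B)))%MS).

Definition solution_length (n : nat) (h : 'I_n -> nat) : nat := (\sum_(u < n) h u)%N.

(* Each requirement (u, a) lies in some part Nt l of the partition.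
   Reading the centralized solution for the problem induced by Nt l through
   the 0/1 matrix that places column j of the induced problem at column
   enum_val j of the original one turns it into a decoding of block a by
   node u from beta l and u's side information alone.  Sender l only ever
   encodes blocks it holds, because Nt l lies in its sender neighborhood. *)
From mathcomp Require Import all_boot all_order all_algebra.
Set Implicit Arguments. Unset Strict Implicit. Unset Printing Implicit Defensive.
Import GRing.Theory.
Local Open Scope ring_scope.

Section ColumnEmbedding.
Variables (T : pzRingType) (m : nat) (A : {set 'I_m}).

Definition col_embed : 'M[T]_(#|A|, m) := \matrix_(j, c) (c == enum_val j)%:R.

Lemma col_embed_enum_val h (M : 'M[T]_(h, #|A|)) i j :
  (M *m col_embed) i (enum_val j) = M i j.
Proof.
rewrite mxE (bigD1 j) //= mxE eqxx mulr1 big1 ?addr0 // => k /negbTE njk.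
by rewrite mxE (inj_eq enum_val_inj) eq_sym njk mulr0.
Qed.

Lemma col_embed_notin h (M : 'M[T]_(h, #|A|)) i c :
  c \notin A -> (M *m col_embed) i c = 0.
Proof.
move=> cA; rewrite mxE big1 // => j _; rewrite mxE.
case: eqP => [c_j | _]; last by rewrite mulr0.
by move: (enum_valP j); rewrite -c_j (negbTE cA).
Qed.

Lemma delta_col_embed j :
  delta_mx 0 j *m col_embed = delta_mx 0 (enum_val j) :> 'rV[T]_m.
Proof. by rewrite -rowE; apply/matrixP=> i c; rewrite !mxE (ord1 i) eqxx. Qed.

Lemma diag_col_embed (d : 'rV[T]_m) :
  diag_mx (\row_j d 0 (enum_val j)) *m col_embed = col_embed *m diag_mx d.
Proof.
rewrite mul_diag_mx mul_mx_diag; apply/matrixP=> j c; rewrite !mxE.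
by case: eqP => [-> | _]; rewrite ?mulr0 ?mul0r ?mulr1 ?mul1r.
Qed.

End ColumnEmbedding.

Arguments col_embed {T m} A.

Lemma zero_col_ext_col_embed n m (S : {set 'I_n * 'I_m}) h
    (betac : 'M[F2]_(h, #|induced_blocks S|)) (b : 'M[F2]_(h, m)) :
  zero_col_ext betac b -> b = betac *m col_embed (induced_blocks S).
Proof.
case=> b_enum b_notin; apply/matrixP=> i c.
have [cS | cS] := boolP (c \in induced_blocks S); last first.
  by rewrite b_notin // col_embed_notin.
by rewrite -(enum_rankK_in cS cS) b_enum col_embed_enum_val.
Qed.

Lemma zero_col_ext_sender n m (R B : 'M[F2]_(n, m)) (S : {set 'I_n * 'I_m})
    w h (betac : 'M[F2]_(h, #|induced_blocks S|)) (b : 'M[F2]_(h, m)) :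
  S \subset sender_nbhd R B w -> zero_col_ext betac b ->
  forall a, B w a = 0 -> forall i, b i a = 0.
Proof.
move=> S_w [_ b_notin] a Bwa i; apply: b_notin; apply/negP.
rewrite inE => /existsP [u /(subsetP S_w)].
by rewrite inE Bwa => /andP [].
Qed.

Lemma centralized_solution_decodes n m (B : 'M[F2]_(n, m))
    (S : {set 'I_n * 'I_m}) h (betac : 'M[F2]_(h, #|induced_blocks S|))
    (b : 'M[F2]_(h, m)) u a :
  centralized_solution (induced_R S) (induced_B B S) betac ->
  zero_col_ext betac b -> (u, a) \in S ->
  (unit_row a <= col_mx b (diag_mx (row u B)))%MS.
Proof.
move=> sol ext uaS.
have aS : a \in induced_blocks S by rewrite inE; apply/existsP; exists u.
pose j := enum_rank_in aS a.
have j_a : enum_val j = a by rewrite enum_rankK_in.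
have Ruj : induced_R S u j = 1 by rewrite mxE j_a uaS.
have := submxMr (col_embed (T:=F2) (induced_blocks S)) (sol u j Ruj).
rewrite /unit_row delta_col_embed j_a mul_col_mx -(zero_col_ext_col_embed ext).
have -> : row u (induced_B B S) = \row_k (row u B) 0 (enum_val k).
  by apply/matrixP=> i k; rewrite !mxE.
rewrite diag_col_embed => /submx_trans; apply.
by rewrite -!addsmxE addsmxS // submxMl.
Qed.

Lemma submx_sum_genmx_add (K : fieldType) n m k (h : 'I_n -> nat)
    (beta : forall l : 'I_n, 'M[K]_(h l, m)) (D : 'M[K]_(k, m))
    (U : 'M[K]_(1, m)) l :
  (U <= col_mx (beta l) D)%MS -> (U <= (\sum_(l < n) <<beta l>>) + D)%MS.
Proof.
move/submx_trans; apply; rewrite -addsmxE addsmxS //.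
by apply: (sumsmx_sup l) => //; rewrite genmxE.
Qed.

Theorem lemma2 (n m : nat) (R B : 'M['F_2]_(n, m))
    (Nt : 'I_n -> {set 'I_n * 'I_m})
    (h : 'I_n -> nat) (beta : forall w : 'I_n, 'M['F_2]_(h w, m)) :
  EIC_problem R B ->
  neighborhood_partition R B Nt ->
  (forall w : 'I_n,
     exists betac : 'M['F_2]_(h w, #|induced_blocks (Nt w)|),
       centralized_solution (induced_R (Nt w)) (induced_B B (Nt w)) betac /\
       zero_col_ext betac (beta w)) ->
  task_based_solution R B beta /\
  solution_length h = (\sum_(i < n) h i)%N.
Proof.
move=> _ [Nt_sender _ Nt_cover] local_sol; split => //.
have task u a : R u a = 1 ->
    exists l, (unit_row a <= col_mx (beta l) (diag_mx (row u B)))%MS.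
  move=> Rua; have : (u, a) \in req_pairs R by rewrite inE Rua.
  rewrite -Nt_cover => /bigcupP [l _ ua_l]; exists l.
  have [betac [sol ext]] := local_sol l.
  exact: centralized_solution_decodes sol ext ua_l.
split=> //; split=> [u a Bua | u a /task [l]]; last exact: submx_sum_genmx_add.
have [betac [_ ext]] := local_sol u.
exact: zero_col_ext_sender (Nt_sender u) ext a Bua.
Qed.
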